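(* Let $m\ge2$, consider the simply laced Cartan matrix of type $\tilde A_m$ (graph: the cycle on vertices $1,\dots,m+1$ with edges $\{j,j+1\}$, indices mod $m+1$) with an acyclic orientation, and let $z_1,\dots,z_{m+1}$ be commuting indeterminates. Define the frise with variables by $a(j,0)=z_j$ and $a(j,n)a(j,n+1)=1+\big(\prod_{j\to i}a(i,n)\big)\big(\prod_{i\to j}a(i,n+1)\big)$. Then for each $j$, the sequence $(a(j,n))_{n\in\mathbf N}$ is $K$-rational, where $K=\mathbf N[z_1^{\pm1},\dots,z_{m+1}^{\pm1}]$ is the semiring of Laurent polynomials in the $z_i$ with nonnegative integer coefficients.
   Context: For a commutative semiring $K$, a sequence $(a_n)_{n\in\mathbf N}$ in $K$ is $K$-rational if there exist $r\ge1$, $\lambda\in K^{1\times r}$, $M\in K^{r\times r}$, $\gamma\in K^{r\times1}$ with $a_n=\lambda M^n\gamma$ for all $n$ (equivalently, $\sum a_nX^n$ lies in the smallest subsemiring of $K[[X]]$ containing $K[X]$ and closed under $T\mapsto\sum_{k\ge0}T^k$ for $T$ without constant term). The orientation notation $i\to j$ means the edge $\{i,j\}$ is oriented from $i$ to $j$; the recurrence determines the $a(j,n)$ as rational functions since the orientation is acyclic. *)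

From HB Require Import structures.
From mathcomp Require Import all_boot all_order all_algebra.
Set Implicit Arguments. Unset Strict Implicit. Unset Printing Implicit Defensive.
Import Order.TTheory GRing.Theory Num.Theory.
Local Open Scope ring_scope.

(* Polynomials with integer coefficients in n commuting indeterminates,
   built as iterated univariate polynomials: mpoly n.+1 = {poly mpoly n}. *)
Fixpoint mpoly (n : nat) : idomainType :=
  if n is n'.+1 then GRing.IntegralDomain.clone {poly (mpoly n')} _
  else GRing.IntegralDomain.clone int _.

(* The i-th indeterminate (i < n) of mpoly n; the last one is the outer 'X. *)
Fixpoint mvar (n : nat) : nat -> mpoly n :=
  if n is n'.+1 then fun i => if i == n' then ('X : {poly mpoly n'})
                                else ((mvar n' i)%:P : {poly mpoly n'})
  else fun _ => (0 : int).

Fixpoint nonneg_coefs (n : nat) : mpoly n -> bool :=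
  if n is n'.+1 then fun p : {poly mpoly n'} => all (@nonneg_coefs n') p
  else fun x : int => 0 <= x.

Definition ratfun (n : nat) : fieldType := {fraction (mpoly n)}.

(* The indeterminate z_i (0-based) as a rational function. *)
Definition zvar (n : nat) (i : 'I_n) : ratfun n := FracField.tofrac (mvar n i).

(* The semiring K = N[z_1^{±1},...,z_n^{±1}], viewed as a subsemiring of
   ratfun n: elements p / z^e with p in N[z] and e a monomial exponent. *)
Definition in_K (n : nat) (x : ratfun n) : Prop :=
  exists (p : mpoly n) (e : 'I_n -> nat),
    nonneg_coefs p /\
    x = FracField.tofrac p / \prod_(i < n) zvar i ^+ e i.

Definition K_rational (n : nat) (a : nat -> ratfun n) : Prop :=
  exists (r : nat) (lam : 'rV[ratfun n]_r.+1) (M : 'M[ratfun n]_r.+1)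
         (gam : 'cV[ratfun n]_r.+1),
    (forall j, in_K (lam 0 j)) /\ (forall i j, in_K (M i j)) /\
    (forall i, in_K (gam i 0)) /\
    forall k, a k = (lam *m (M ^+ k) *m gam) 0 0.

(* Orientation of the cycle on 'I_N (vertices 0..N-1, edges {j, j+1 mod N}):
   o j = true means the edge {j, j+1} is oriented j -> j+1, else j+1 -> j.
   cyc_arrow o i j means i -> j. *)
Definition cyc_arrow (N : nat) (o : 'I_N -> bool) : rel 'I_N :=
  fun i j => ((j == ordS i) && o i) || ((i == ordS j) && ~~ o j).

Definition acyclic_orientation (N : nat) (o : 'I_N -> bool) : bool :=
  ~~ [exists i, exists j, cyc_arrow o i j && connect (cyc_arrow o) j i].

Definition frise_with_variables (m : nat) (o : 'I_m.+1 -> bool)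
    (a : 'I_m.+1 -> nat -> ratfun m.+1) : Prop :=
  (forall j, a j 0%N = zvar j) /\
  forall j (k : nat),
    a j k * a j k.+1 =
      1 + (\prod_(i | cyc_arrow o j i) a i k) * (\prod_(i | cyc_arrow o i j) a i k.+1).

(* The proof goes through an explicit formula for the frise.  Unroll the
   cycle into a path on nat (vertex i is i mod N, N = m+1) and attach to the
   step i -> i+1 a 2x2 transfer matrix T_i, with entries in K, depending on
   z_i, z_(i+1) and on the orientation of the edge {i, i+1}.  For a window
   [p, p+d] of the path put G(p, d) = z_p (T_p ... T_(p+d-1))_11.
   - Polynomials with nonnegative coefficients, and K, are closed under sum
     and product; nonzero elements of K stay nonzero under these operations.
   - A sequence read off a finite deterministic automaton with weights in K
     is K-rational.
   - The G(p, d) satisfy the diamond relation of frises, and are unchanged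
     by runs of steps of a fixed direction at the ends of the window.
   - a(j, n) = G(window of (j, n)), the windows being described by the gaps
     between the changes of orientation around the cycle; a case analysis
     on the orientations around j shows that this solves the recurrence.
   - For an acyclic orientation the recurrence has at most one solution,
     since the entries are nonzero and arrows can be followed inductively.
   - The window product of row n+1 is that of row n multiplied on both sides
     by blocks that only depend on the window ends modulo N, so the
     automaton criterion applies. *)

From mathcomp Require Import all_boot all_order all_algebra.
From mathcomp Require Import ring zify.
Import GRing.Theory Num.Theory.

Set Implicit Arguments.
Unset Strict Implicit.
Unset Printing Implicit Defensive.

Section NonnegCoefs.
Local Open Scope ring_scope.

Lemma nonneg_coefs0 n : nonneg_coefs (0 : mpoly n).
Proof. by case: n => [|k] //=; rewrite polyseq0. Qed.

Lemma nonneg_coefsP n (p : {poly mpoly n}) :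
  reflect (forall i, nonneg_coefs (p`_i : mpoly n)) (@nonneg_coefs n.+1 p).
Proof.
apply: (iffP (all_nthP 0)) => [H i|H i _]; last exact: H.
by case: (ltnP i (size p)) => hi; [exact: H | rewrite nth_default // nonneg_coefs0].
Qed.

Lemma nonneg_coefsD n (p q : mpoly n) :
  nonneg_coefs p -> nonneg_coefs q -> nonneg_coefs (p + q).
Proof.
elim: n p q => [|n IH] p q /=; first exact: addr_ge0.
move=> /nonneg_coefsP hp /nonneg_coefsP hq; apply/nonneg_coefsP => i.
by rewrite coefD; apply: IH.
Qed.

Lemma nonneg_coefsM n (p q : mpoly n) :
  nonneg_coefs p -> nonneg_coefs q -> nonneg_coefs (p * q).
Proof.
elim: n p q => [|n IH] p q /=; first exact: mulr_ge0.
move=> /nonneg_coefsP hp /nonneg_coefsP hq; apply/nonneg_coefsP => i.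
rewrite coefM; apply: (big_ind (@nonneg_coefs n)) => [|x y|j _].
- exact: nonneg_coefs0.
- exact: nonneg_coefsD.
- exact: IH.
Qed.

Lemma nonneg_coefs1 n : nonneg_coefs (1 : mpoly n).
Proof.
elim: n => [|n IH] //=; apply/nonneg_coefsP => i.
by rewrite coef1; case: (i == 0)%N => //; apply: nonneg_coefs0.
Qed.

Lemma nonneg_coefs_prod n (I : Type) (r : seq I) (P : pred I) (F : I -> mpoly n) :
  (forall i, P i -> nonneg_coefs (F i)) -> nonneg_coefs (\prod_(i <- r | P i) F i).
Proof.
move=> hF; apply: (big_ind (@nonneg_coefs n)) => //.
- exact: nonneg_coefs1.
- exact: nonneg_coefsM.
Qed.

Lemma nonneg_coefs_mvar n i : nonneg_coefs (mvar n i).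
Proof.
elim: n i => [|n IH] i //=; apply/nonneg_coefsP => k; case: (i == n).
- by rewrite coefX; case: (k == 1)%N; [apply: nonneg_coefs1 | apply: nonneg_coefs0].
- by rewrite coefC; case: (k == 0)%N; [apply: IH | apply: nonneg_coefs0].
Qed.

(* With nonnegative coefficients no cancellation can occur: a sum is zero
   only if its summands are.  This keeps sums of nonzero elements of K nonzero. *)
Lemma nonneg_coefs_addr_eq0 n (p q : mpoly n) :
  nonneg_coefs p -> nonneg_coefs q -> p + q = 0 -> p = 0.
Proof.
elim: n p q => [|n IH] p q /=.
  by move=> hp hq /eqP; rewrite paddr_eq0 // => /andP [/eqP].
move=> /nonneg_coefsP hp /nonneg_coefsP hq hpq; apply/polyP => i.
by rewrite coef0; apply: (IH _ q`_i) => //; rewrite -coefD hpq coef0.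
Qed.

Lemma mvar_neq0 n i : (i < n)%N -> mvar n i != 0.
Proof.
elim: n i => [|n IH] i //= hi; case: ifP => [_|hne].
  apply/eqP => /(congr1 (fun p : {poly mpoly n} => p`_1)).
  by rewrite coefX coef0 /=; apply/eqP/oner_neq0.
apply/eqP => /(congr1 (fun p : {poly mpoly n} => p`_0)); rewrite coefC coef0 /=.
by apply/eqP/IH; rewrite ltn_neqAle hne -ltnS.
Qed.
End NonnegCoefs.

Section SemiringK.
Local Open Scope ring_scope.
Variable n : nat.
Local Notation tofrac := (@FracField.tofrac (mpoly n)).

Definition zmono (e : 'I_n -> nat) : ratfun n := \prod_(i < n) zvar i ^+ e i.
Definition mvar_mono (e : 'I_n -> nat) : mpoly n := \prod_(i < n) mvar n i ^+ e i.

Lemma zvar_neq0 (i : 'I_n) : zvar i != 0.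
Proof. by rewrite /zvar tofrac_eq0 mvar_neq0. Qed.

Lemma zmono_neq0 e : zmono e != 0.
Proof. by apply/prodf_neq0 => i _; rewrite expf_neq0 // zvar_neq0. Qed.

Lemma tofrac_mvar_mono e : tofrac (mvar_mono e) = zmono e.
Proof. by rewrite rmorph_prod; apply: eq_bigr => i _; rewrite rmorphXn. Qed.

Lemma nonneg_coefs_mvar_mono e : nonneg_coefs (mvar_mono e).
Proof.
apply: nonneg_coefs_prod => i _; elim: (e i) => [|k IH]; first exact: nonneg_coefs1.
by rewrite exprS; apply: nonneg_coefsM => //; apply: nonneg_coefs_mvar.
Qed.

Lemma zmonoD e f : zmono (fun i => (e i + f i)%N) = zmono e * zmono f.
Proof. by rewrite /zmono -big_split; apply: eq_bigr => i _; rewrite exprD. Qed.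

Lemma zmono0 : zmono (fun _ => 0%N) = 1.
Proof. exact: big1. Qed.

Lemma zmono_delta (i : 'I_n) : zmono (fun k => (k == i) : nat) = zvar i.
Proof.
by rewrite /zmono (bigD1 i) //= eqxx expr1 big1 ?mulr1 // => k /negbTE ->.
Qed.

(* Every frise entry lies in this set, which is
   how we know that the recurrence can be solved by division. *)
Definition in_Kpos (x : ratfun n) : Prop :=
  exists (p : mpoly n) (e : 'I_n -> nat),
    [/\ nonneg_coefs p, p != 0 & x = tofrac p / zmono e].

Lemma in_K0 : in_K (0 : ratfun n).
Proof.
exists 0, (fun _ => 0%N); split; first exact: nonneg_coefs0.
by rewrite rmorph0 mul0r.
Qed.

Lemma in_KM (x y : ratfun n) : in_K x -> in_K y -> in_K (x * y).
Proof.
move=> [p [e [hp ->]]] [q [f [hq ->]]]; exists (p * q), (fun i => (e i + f i)%N).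
by split; [exact: nonneg_coefsM | rewrite tofracM mulf_div -zmonoD].
Qed.

Lemma in_KD (x y : ratfun n) : in_K x -> in_K y -> in_K (x + y).
Proof.
move=> [p [e [hp ->]]] [q [f [hq ->]]].
exists (p * mvar_mono f + q * mvar_mono e), (fun i => (e i + f i)%N); split.
  by apply: nonneg_coefsD; apply: nonneg_coefsM => //; apply: nonneg_coefs_mvar_mono.
rewrite -/(zmono e) -/(zmono f) addf_div ?zmono_neq0 //.
by rewrite -zmonoD tofracD !tofracM !tofrac_mvar_mono.
Qed.

Lemma in_K_zvar (i : 'I_n) : in_K (zvar i).
Proof.
exists (mvar n i), (fun _ => 0%N).
by split; [exact: nonneg_coefs_mvar | rewrite -/(zmono _) zmono0 divr1].
Qed.

Lemma in_Kpos_K x : in_Kpos x -> in_K x.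
Proof. by move=> [p [e [hp _ ->]]]; exists p, e. Qed.

Lemma in_Kpos_neq0 x : in_Kpos x -> x != 0.
Proof.
by move=> [p [e [_ hp ->]]]; rewrite mulf_neq0 ?invr_eq0 ?zmono_neq0 ?tofrac_eq0.
Qed.

Lemma in_Kpos1 : in_Kpos 1.
Proof.
exists 1, (fun _ => 0%N); split; [exact: nonneg_coefs1 | exact: oner_neq0 |].
by rewrite rmorph1 zmono0 divr1.
Qed.

Lemma in_K1 : in_K (1 : ratfun n).
Proof. exact: in_Kpos_K in_Kpos1. Qed.

Lemma in_K_nat_bool (b : bool) : in_K (b%:R : ratfun n).
Proof. by case: b; [exact: in_K1 | exact: in_K0]. Qed.

Lemma in_KposM (x y : ratfun n) : in_Kpos x -> in_Kpos y -> in_Kpos (x * y).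
Proof.
move=> [p [e [hp hp0 ->]]] [q [f [hq hq0 ->]]].
exists (p * q), (fun i => (e i + f i)%N); split; first exact: nonneg_coefsM.
  exact: mulf_neq0.
by rewrite tofracM mulf_div zmonoD.
Qed.

Lemma in_KposD (x y : ratfun n) : in_Kpos x -> in_K y -> in_Kpos (x + y).
Proof.
move=> [p [e [hp hp0 ->]]] [q [f [hq ->]]].
have hpf := nonneg_coefsM hp (nonneg_coefs_mvar_mono f).
have hqe := nonneg_coefsM hq (nonneg_coefs_mvar_mono e).
exists (p * mvar_mono f + q * mvar_mono e), (fun i => (e i + f i)%N); split.
- exact: nonneg_coefsD.
- apply/eqP => /(nonneg_coefs_addr_eq0 hpf hqe) /eqP.
  rewrite mulf_eq0 (negbTE hp0) -(tofrac_eq0 (R := mpoly n)) tofrac_mvar_mono.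
  by rewrite (negbTE (zmono_neq0 f)).
- by rewrite addf_div ?zmono_neq0 // zmonoD tofracD !tofracM !tofrac_mvar_mono.
Qed.

Lemma in_Kpos_zvar (i : 'I_n) : in_Kpos (zvar i).
Proof.
exists (mvar n i), (fun _ => 0%N); split; [exact: nonneg_coefs_mvar | exact: mvar_neq0 |].
by rewrite zmono0 divr1.
Qed.

Lemma in_Kpos_zvarV (i : 'I_n) : in_Kpos (zvar i)^-1.
Proof.
exists 1, (fun k => (k == i) : nat); split; [exact: nonneg_coefs1 | exact: oner_neq0 |].
by rewrite rmorph1 mul1r zmono_delta.
Qed.

End SemiringK.

(* K-rationality of sequences produced by a finite automaton: a vector v_k
   indexed by a finite set I evolves by v_{k+1} = L(s_k) v_k and a_k is read
   off as lam(s_k) . v_k, where the state s_k follows a deterministic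
   transition on a finite set Ph.  Tracking (state, index) pairs turns this
   into a single constant matrix over K. *)
Section AutomatonRational.
Local Open Scope ring_scope.
Variables (n : nat) (Ph I : finType) (s0 : Ph) (i0 : I) (next : Ph -> Ph).
Variables (L : Ph -> I -> I -> ratfun n) (lam : Ph -> I -> ratfun n).
Variables (v : nat -> I -> ratfun n) (a : nat -> ratfun n).
Hypotheses (L_K : forall s i j, in_K (L s i j)) (lam_K : forall s i, in_K (lam s i)).
Hypothesis v0_K : forall i, in_K (v 0%N i).
Hypothesis v_step : forall k i, v k.+1 i = \sum_j L (iter k next s0) i j * v k j.
Hypothesis a_read : forall k, a k = \sum_i lam (iter k next s0) i * v k i.

Local Notation J := (Ph * I)%type.
Local Notation state k := (iter k next s0).

Let Mj (x y : J) : ratfun n := (x.1 == next y.1)%:R * L y.1 x.2 y.2.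
Let gj (y : J) : ratfun n := (y.1 == s0)%:R * v 0%N y.2.
Let lj (x : J) : ratfun n := lam x.1 x.2.
Let wj k (x : J) : ratfun n := (x.1 == state k)%:R * v k x.2.

Lemma sum_on_state k (F : Ph -> I -> ratfun n) :
  \sum_(x : J) (x.1 == state k)%:R * F x.1 x.2 = \sum_j F (state k) j.
Proof.
rewrite -(pair_big xpredT xpredT (fun p j => (p == state k)%:R * F p j)) /=.
rewrite (bigD1 (state k)) //= [X in _ + X]big1 ?addr0; last first.
  by move=> p /negbTE hp; apply: big1 => j _; rewrite hp mul0r.
by apply: eq_bigr => j _; rewrite eqxx mul1r.
Qed.

Lemma wj_step k x : wj k.+1 x = \sum_y Mj x y * wj k y.
Proof.
rewrite /wj /Mj v_step big_distrr /=.
under [RHS]eq_bigr => y _ do rewrite mulrCA.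
rewrite (sum_on_state k (fun p j => (x.1 == next p)%:R * L p x.2 j * v k j)).
by apply: eq_bigr => j _; rewrite mulrA.
Qed.

Lemma a_wj k : a k = \sum_x lj x * wj k x.
Proof.
rewrite a_read /wj /lj.
under [RHS]eq_bigr => y _ do rewrite mulrCA.
by rewrite (sum_on_state k (fun p j => lam p j * v k j)).
Qed.

Lemma automaton_rational : K_rational a.
Proof.
have J_gt0 : (0 < #|{: J}|)%N by apply/card_gt0P; exists (s0, i0).
set r := #|{: J}|.-1; have Hr : r.+1 = #|{: J}| by rewrite prednK.
pose f (k : 'I_r.+1) : J := enum_val (cast_ord Hr k).
pose g (x : J) : 'I_r.+1 := cast_ord (esym Hr) (enum_rank x).
have fK : cancel f g by move=> k; rewrite /f /g enum_valK cast_ordK.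
have gK : cancel g f by move=> x; rewrite /f /g cast_ordKV enum_rankK.
have reindex_J (F : J -> ratfun n) : \sum_(x : J) F x = \sum_(k < r.+1) F (f k).
  by rewrite (reindex f) //; apply: onW_bij; exact: (Bijective fK gK).
pose M := \matrix_(i, j) Mj (f i) (f j); pose gam := \col_k gj (f k).
exists r, (\row_k lj (f k)), M, gam; split; [|split; [|split]].
- by move=> j; rewrite mxE; apply: lam_K.
- by move=> i j; rewrite mxE; apply: in_KM; [exact: in_K_nat_bool | exact: L_K].
- by move=> i; rewrite mxE; apply: in_KM; [exact: in_K_nat_bool | exact: v0_K].
have powM_gam k i : (M ^+ k *m gam) i 0 = wj k (f i).
  elim: k i => [|k IH] i; first by rewrite expr0 mul1mx mxE.
  rewrite exprS -mulmxE -mulmxA mxE wj_step reindex_J.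
  by apply: eq_bigr => j _; rewrite mxE IH.
move=> k; rewrite -mulmxA mxE a_wj reindex_J.
by apply: eq_bigr => j _; rewrite powM_gam mxE.
Qed.
End AutomatonRational.

Section Periodic.
Variables (T : Type) (N : nat) (f : nat -> T).
Hypothesis f_periodic : forall i, f (i + N) = f i.

Lemma periodic_mulK i k : f (i + N * k) = f i.
Proof. by elim: k => [|k IH]; rewrite ?muln0 ?addn0 // mulnS addnCA addnC f_periodic. Qed.

Lemma periodic_mod i : f (i %% N) = f i.
Proof. by rewrite {2}(divn_eq i N) addnC mulnC periodic_mulK. Qed.
End Periodic.

(* 2x2 matrices over a field, as a record with explicit entries, so that
   products of transfer matrices can be computed entrywise. *)
Section Matrix2.
Local Open Scope ring_scope.
Variable F : fieldType.

Record m2 := M2 { e11 : F; e12 : F; e21 : F; e22 : F }.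

Definition mmul (A B : m2) : m2 :=
  M2 (e11 A * e11 B + e12 A * e21 B) (e11 A * e12 B + e12 A * e22 B)
     (e21 A * e11 B + e22 A * e21 B) (e21 A * e12 B + e22 A * e22 B).
Definition mone : m2 := M2 1 0 0 1.
Definition mdet (A : m2) : F := e11 A * e22 A - e12 A * e21 A.
Definition ent (A : m2) (b1 b2 : bool) : F :=
  if b1 then (if b2 then e11 A else e12 A) else (if b2 then e21 A else e22 A).

Lemma mmulA A B C : mmul A (mmul B C) = mmul (mmul A B) C.
Proof. by case: A B C => [? ? ? ?] [? ? ? ?] [? ? ? ?]; congr M2 => /=; ring. Qed.

Lemma mmul1m A : mmul mone A = A.
Proof. by case: A => ? ? ? ?; congr M2 => /=; ring. Qed.

Lemma mmulm1 A : mmul A mone = A.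
Proof. by case: A => ? ? ? ?; congr M2 => /=; ring. Qed.

Lemma mdetM A B : mdet (mmul A B) = mdet A * mdet B.
Proof. by case: A B => [? ? ? ?] [? ? ? ?]; rewrite /mdet /=; ring. Qed.

Lemma ent_mmul A B b1 b2 :
  ent (mmul A B) b1 b2 = ent A b1 true * ent B true b2 + ent A b1 false * ent B false b2.
Proof. by case: b1; case: b2. Qed.

Lemma ent_conj (A X B : m2) c1 c2 :
  ent (mmul (mmul A X) B) c1 c2 =
  \sum_(y : bool * bool) ent A c1 y.1 * ent B y.2 c2 * ent X y.1 y.2.
Proof.
rewrite -(pair_bigA _ (fun i j => ent A c1 i * ent B j c2 * ent X i j)) /= !big_bool /=.
by case: c1; case: c2; rewrite /ent /=; ring.
Qed.
End Matrix2.

Section TransferMatrices.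
Local Open Scope ring_scope.
Variables (F : fieldType) (x : nat -> F) (st : nat -> bool).
Hypothesis x_neq0 : forall i, x i != 0.

Definition tmat (i : nat) : m2 F :=
  if st i then M2 (x i.+1 / x i) 0 (x i)^-1 1 else M2 1 (x i)^-1 0 (x i.+1 / x i).

Fixpoint tprod (p d : nat) : m2 F :=
  if d is d'.+1 then mmul (tprod p d') (tmat (p + d')) else mone F.

Definition gfrise (p d : nat) : F := x p * e11 (tprod p d).

Lemma tprodD p d k : tprod p (d + k) = mmul (tprod p d) (tprod (p + d) k).
Proof.
elim: k => [|k IH]; first by rewrite addn0 mmulm1.
by rewrite addnS /= IH -mmulA addnA.
Qed.

Lemma tprodS p d : tprod p d.+1 = mmul (tmat p) (tprod p.+1 d).
Proof. by rewrite -add1n tprodD /= addn1 addn0 mmul1m. Qed.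

Lemma gfrise0 p : gfrise p 0 = x p.
Proof. by rewrite /gfrise mulr1. Qed.

Lemma mdet_tprod p d : mdet (tprod p d) = x (p + d) / x p.
Proof.
elim: d => [|d IH]; first by rewrite /mdet /= addn0 mulr1 mulr0 subr0 divff.
rewrite /= mdetM IH addnS /mdet /tmat.
by case: (st _) => /=; field; rewrite !x_neq0.
Qed.

Lemma gfrise_right p d k : (forall t, (t < k)%N -> st (p + d + t) = false) ->
  gfrise p (d + k) = gfrise p d.
Proof.
have tprod_false q l : (forall t, (t < l)%N -> st (q + t) = false) ->
    e11 (tprod q l) = 1 /\ e21 (tprod q l) = 0.
  elim: l => [|l IH] h //=; have [-> ->] := IH (fun t ht => h t (ltnW ht)).
  by rewrite /tmat h //=; split; ring.
move=> /tprod_false [h11 h21].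
by rewrite /gfrise tprodD /= h11 h21 mulr1 mulr0 addr0.
Qed.

Lemma gfrise_left p d k : (forall t, (t < k)%N -> st (p + t) = true) ->
  gfrise p (k + d) = gfrise (p + k) d.
Proof.
have tprod_true q l : (forall t, (t < l)%N -> st (q + t) = true) ->
    e11 (tprod q l) = x (q + l) / x q /\ e12 (tprod q l) = 0.
  elim: l => [|l IH] h /=; first by rewrite addn0 divff.
  have [-> ->] := IH (fun t ht => h t (ltnW ht)).
  by rewrite /tmat h //= addnS; split; [field; rewrite !x_neq0 | ring].
move=> /tprod_true [h11 h12].
by rewrite /gfrise tprodD /= h11 h12; field; rewrite x_neq0.
Qed.

Lemma gfrise_diamond q d : st q = false -> st (q.+1 + d) = true ->
  gfrise q.+1 d * gfrise q d.+2 = 1 + gfrise q.+1 d.+1 * gfrise q d.+1.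
Proof.
move=> st_q st_qd; rewrite /gfrise (tprodS q d.+1) (tprodS q d) /=.
have := mdet_tprod q.+1 d; case: (tprod q.+1 d) => m11 m12 m21 m22.
rewrite /mdet /tmat st_q st_qd /= => det_eq.
apply/eqP; rewrite -subr_eq0.
rewrite (_ : _ - _ = x q.+1 / x (q.+1 + d) * (m11 * m22 - m12 * m21 - x (q.+1 + d) / x q.+1)).
  by rewrite det_eq subrr mulr0.
by field; rewrite !x_neq0.
Qed.
End TransferMatrices.

Section TransferPeriodic.
Local Open Scope ring_scope.
Variables (F : fieldType) (x : nat -> F) (st : nat -> bool) (N : nat).
Hypothesis x_periodic : forall i, x (i + N) = x i.
Hypothesis st_periodic : forall i, st (i + N) = st i.

Lemma tprod_periodic p d : tprod x st (p + N) d = tprod x st p d.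
Proof.
elim: d => [|d IH] //=.
by rewrite IH addnAC /tmat st_periodic -addSn !x_periodic.
Qed.

Lemma gfrise_periodic p d : gfrise x st (p + N) d = gfrise x st p d.
Proof. by rewrite /gfrise tprod_periodic x_periodic. Qed.
End TransferPeriodic.

(* The cycle of type A~_m unrolled to a path on nat: vertex i of the path is
   i mod N, with weight z_(i mod N), and the step i -> i+1 goes along the
   path iff the edge {i, i+1} is oriented i -> i+1. *)
Section CyclicFrise.
Variables (m : nat) (o : 'I_m.+1 -> bool).
Hypothesis has_true : exists i, o i.
Hypothesis has_false : exists i, ~~ o i.
Local Notation N := m.+1.

Definition cyc (i : nat) : 'I_N := Ordinal (ltn_pmod i (ltn0Sn m)).
Definition zc (i : nat) : ratfun N := zvar (cyc i).
Definition oc (i : nat) : bool := o (cyc i).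
Local Notation gc := (gfrise zc oc).

Lemma cyc_periodic i : cyc (i + N) = cyc i.
Proof. by apply: val_inj; rewrite /= modnDr. Qed.

Lemma cyc_ord (j : 'I_N) : cyc j = j.
Proof. by apply: val_inj; rewrite /= modn_small. Qed.

Lemma zc_periodic i : zc (i + N) = zc i. Proof. by rewrite /zc cyc_periodic. Qed.
Lemma oc_periodic i : oc (i + N) = oc i. Proof. by rewrite /oc cyc_periodic. Qed.
Lemma zc_neq0 i : zc i != 0%R. Proof. exact: zvar_neq0. Qed.

Lemma oc_periodicK i k : oc (i + N * k) = oc i.
Proof. exact: (periodic_mulK oc_periodic). Qed.

Lemma gc_periodicK p k d : gc (p + N * k) d = gc p d.
Proof.
exact: (periodic_mulK (f := gc^~ d) (fun p => gfrise_periodic zc_periodic oc_periodic p d)).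
Qed.

(* Every vertex is reached going forward, and going backward (a step back
   is a step of m forward). *)
Lemma cyc_reach_fwd e (i : 'I_N) : exists c, cyc (e + c) = i.
Proof.
exists (i + N - e %% N)%N; apply: val_inj => /=.
have e_eq := divn_eq e N; have e_lt := ltn_pmod e (ltn0Sn m); have i_lt := ltn_ord i.
rewrite (_ : e + _ = (e %/ N).+1 * N + i); last by nia.
by rewrite modnMDl modn_small.
Qed.

Lemma cyc_reach_bwd q (i : 'I_N) : exists c, cyc (q + m * c.+1) = i.
Proof.
have q_lt := ltn_pmod q (ltn0Sn m); have i_lt := ltn_ord i.
set k := (q %% N + N - i)%N; exists k.-1; rewrite prednK; last by lia.
apply: val_inj => /=; rewrite -(modn_small i_lt).
have q_eq := divn_eq q N.
apply/eqP; rewrite -(eqn_modDr k) (_ : q + m * k + k = (q %/ N + k) * N + q %% N); last by nia.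
by rewrite (_ : i + k = 1 * N + q %% N); [rewrite !modnMDl | lia].
Qed.

Lemma exists_fwd e : exists c, oc (e + c).
Proof. by have [i oi] := has_true; have [c hc] := cyc_reach_fwd e i; exists c; rewrite /oc hc. Qed.

Lemma exists_bwd q : exists c, ~~ oc (q + m * c.+1).
Proof. by have [i oi] := has_false; have [c hc] := cyc_reach_bwd q i; exists c; rewrite /oc hc. Qed.

(* fwd_gap e: distance from e to the next step along the path;
   bwd_gap q: number of consecutive steps along the path just before q
   (going back from q, steps of length m). *)
Definition fwd_gap (e : nat) : nat := ex_minn (exists_fwd e).
Definition bwd_gap (q : nat) : nat := ex_minn (exists_bwd q).

Lemma fwd_gapP e :
  oc (e + fwd_gap e) /\ forall t, t < fwd_gap e -> oc (e + t) = false.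
Proof.
rewrite /fwd_gap; case: ex_minnP => c hc hmin; split => // t ht.
by apply/negP => /hmin; rewrite leqNgt ht.
Qed.

Lemma bwd_gapP q :
  oc (q + m * (bwd_gap q).+1) = false /\ forall t, t < bwd_gap q -> oc (q + m * t.+1).
Proof.
rewrite /bwd_gap; case: ex_minnP => c /negbTE hc hmin; split => // t ht.
by apply/negPn/negP => /hmin; rewrite leqNgt ht.
Qed.

Lemma fwd_gap_unique e c :
  oc (e + c) -> (forall t, t < c -> oc (e + t) = false) -> fwd_gap e = c.
Proof.
move=> h1 h2; have [h3 h4] := fwd_gapP e.
case: (ltngtP (fwd_gap e) c) => // hc; first by move: (h2 _ hc); rewrite h3.
by move: (h4 _ hc); rewrite h1.
Qed.

Lemma bwd_gap_unique q c : oc (q + m * c.+1) = false ->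
  (forall t, t < c -> oc (q + m * t.+1)) -> bwd_gap q = c.
Proof.
move=> h1 h2; have [h3 h4] := bwd_gapP q.
case: (ltngtP (bwd_gap q) c) => // hc; first by move: (h2 _ hc); rewrite h3.
by move: (h4 _ hc); rewrite h1.
Qed.

Lemma fwd_gap_periodic e : fwd_gap (e + N) = fwd_gap e.
Proof.
have [h1 h2] := fwd_gapP e; apply: fwd_gap_unique; first by rewrite addnAC oc_periodic.
by move=> t ht; rewrite addnAC oc_periodic h2.
Qed.

Lemma bwd_gap_periodic q : bwd_gap (q + N) = bwd_gap q.
Proof.
have [h1 h2] := bwd_gapP q; apply: bwd_gap_unique; first by rewrite addnAC oc_periodic.
by move=> t ht; rewrite addnAC oc_periodic h2.
Qed.

Lemma fwd_gap_true e : oc e -> fwd_gap e = 0.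
Proof. by move=> h; apply: fwd_gap_unique; rewrite ?addn0. Qed.

Lemma fwd_gap_false e : oc e = false -> fwd_gap e = (fwd_gap e.+1).+1.
Proof.
move=> h; have [h1 h2] := fwd_gapP e.+1; apply: fwd_gap_unique; first by rewrite addnS -addSn.
by case=> [|t] ht; [rewrite addn0 | rewrite addnS -addSn h2].
Qed.

Lemma bwd_gap_true q : oc (q + m) -> bwd_gap q = (bwd_gap (q + m)).+1.
Proof.
move=> h; have [h1 h2] := bwd_gapP (q + m); apply: bwd_gap_unique.
  by rewrite -h1; congr oc; lia.
case=> [|t] ht; first by rewrite muln1.
by rewrite (_ : q + m * t.+2 = q + m + m * t.+1) ?h2 //; lia.
Qed.

Lemma bwd_gap_false q : oc (q + m) = false -> bwd_gap q = 0.
Proof. by move=> h; apply: bwd_gap_unique; rewrite ?muln1. Qed.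

(* The window of a(j, n): it starts lwin j n steps before j (at
   j + m * lwin j n, modulo N) and ends rwin j n steps after j. *)
Fixpoint lwin (j n : nat) : nat :=
  if n is n'.+1 then lwin j n' + 1 + bwd_gap (j + m * (lwin j n').+1) else bwd_gap j.
Fixpoint rwin (j n : nat) : nat :=
  if n is n'.+1 then rwin j n' + 1 + fwd_gap (j + rwin j n' + 1) else fwd_gap j.

Definition afr (j n : nat) : ratfun N := gc (j + m * lwin j n) (lwin j n + rwin j n).

Lemma lwinS j n : lwin j n.+1 = lwin j n + 1 + bwd_gap (j + m * (lwin j n).+1).
Proof. by []. Qed.
Lemma rwinS j n : rwin j n.+1 = rwin j n + 1 + fwd_gap (j + rwin j n + 1).
Proof. by []. Qed.

Lemma oc_window_start j n : oc (j + m * (lwin j n).+1) = false.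
Proof.
case: n => [|n] /=; first by case: (bwd_gapP j).
have [<- _] := bwd_gapP (j + m * (lwin j n).+1); congr oc; nia.
Qed.

Lemma oc_window_end j n : oc (j + rwin j n).
Proof.
case: n => [|n] /=; first by case: (fwd_gapP j).
by have [h _] := fwd_gapP (j + rwin j n + 1); rewrite !addnA.
Qed.

Lemma gc_drop_start q L : gc (q + m * bwd_gap q) (bwd_gap q + L) = gc q L.
Proof.
rewrite (gfrise_left zc_neq0).
  by rewrite (_ : q + m * bwd_gap q + bwd_gap q = q + N * bwd_gap q) ?gc_periodicK //; nia.
move=> t ht; have [_ h] := bwd_gapP q.
have := h (bwd_gap q - t - 1) ltac:(lia).
by rewrite -(oc_periodicK _ t) (_ : _ + N * t = q + m * bwd_gap q + t) //; nia.
Qed.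

(* Both windows of a(j, n+1) arise from that of a(j, n) by one step in one
   direction followed by runs that do not change G. *)
Lemma gc_window_right j n :
  gc (j + m * lwin j n) (lwin j n + rwin j n.+1) =
  gc (j + m * lwin j n) (lwin j n + rwin j n).+1.
Proof.
rewrite rwinS.
rewrite (_ : lwin j n + _ = (lwin j n + rwin j n).+1 + fwd_gap (j + rwin j n + 1)); last by lia.
rewrite gfrise_right // => t ht; have [_ h] := fwd_gapP (j + rwin j n + 1).
by rewrite (_ : _ + _ + t = j + rwin j n + 1 + t + N * lwin j n) ?oc_periodicK ?h //; nia.
Qed.

Lemma gc_window_left j n : let q := j + m * (lwin j n).+1 in
  gc (j + m * lwin j n.+1) (lwin j n.+1 + rwin j n) = gc q (lwin j n + rwin j n).+1.
Proof.
move=> q; rewrite lwinS -/q (_ : j + m * _ = q + m * bwd_gap q); last by rewrite /q; nia.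
by rewrite (_ : _ + rwin j n = bwd_gap q + (lwin j n + rwin j n).+1) ?gc_drop_start //; lia.
Qed.

Lemma afr_succ j n : let q := j + m * (lwin j n).+1 in
  afr j n.+1 = gc q (lwin j n + rwin j n).+2.
Proof.
move=> q; rewrite /afr rwinS lwinS -/q.
set c := bwd_gap q; set c' := fwd_gap (j + rwin j n + 1).
rewrite (_ : j + m * _ = q + m * c); last by rewrite /q; nia.
rewrite (_ : lwin j n + 1 + c + _ = c + ((lwin j n + rwin j n).+2 + c')); last by lia.
rewrite gc_drop_start gfrise_right // => t ht; have [_ h] := fwd_gapP (j + rwin j n + 1).
rewrite (_ : q + _ + t = j + rwin j n + 1 + t + N * (lwin j n).+1) ?oc_periodicK ?h //.
by rewrite /q; nia.
Qed.

Lemma afr0 j : afr j 0 = zc j.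
Proof.
rewrite /afr /= -[X in gc _ X]addn0 -addnA gc_drop_start addn0.
rewrite -[fwd_gap j]add0n gfrise_right ?gfrise0 // => t ht.
by have [_ h] := fwd_gapP j; rewrite addn0 h.
Qed.

Lemma afr_diamond j n : let q := j + m * (lwin j n).+1 in
  (afr j n * afr j n.+1 =
     1 + gc (j + m * lwin j n) (lwin j n + rwin j n).+1 * gc q (lwin j n + rwin j n).+1)%R.
Proof.
move=> q; rewrite afr_succ -/q /afr.
have hq : q.+1 = j + m * lwin j n + N * 1 by rewrite /q; nia.
rewrite -!(gc_periodicK (j + m * lwin j n) 1) -hq.
apply: (gfrise_diamond zc_neq0); first exact: oc_window_start.
rewrite (_ : q.+1 + _ = j + rwin j n + N * (lwin j n).+1) ?oc_periodicK ?oc_window_end //.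
by rewrite /q; nia.
Qed.

Lemma oc_succ_pred j : oc (j.+1 + m) = oc j.
Proof. by rewrite addSnnS oc_periodic. Qed.

(* According to the orientation of {j, j+1} and of
   {j-1, j} (j - 1 is j + m modulo N), the two factors in afr_diamond are the
   entries of the frise at j + 1 and j - 1 in row n or n + 1.  Each case
   compares the windows of the neighbour with that of j. *)
Section RightNeighbourAlong.
Variable j : nat.
Hypothesis oc_j : oc j.

Lemma lwin_succ_along n : lwin j.+1 n = (lwin j n).+1.
Proof.
elim: n => [|n IH]; first by rewrite /= bwd_gap_true ?oc_succ_pred // addSnnS bwd_gap_periodic.
rewrite (lwinS j.+1 n) (lwinS j n) IH.
rewrite (_ : j.+1 + m * (lwin j n).+2 = j + m * (lwin j n).+1 + N); last by nia.
by rewrite bwd_gap_periodic; lia.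
Qed.

Lemma rwin_succ_along n : rwin j.+1 n + 1 = rwin j n.+1.
Proof.
elim: n => [|n IH]; first by rewrite /= (fwd_gap_true oc_j) (_ : j + 0 + 1 = j.+1); lia.
rewrite (rwinS j.+1 n) (rwinS j n.+1) -IH.
by rewrite (_ : j + (rwin j.+1 n + 1) + 1 = j.+1 + rwin j.+1 n + 1); lia.
Qed.

Lemma gc_right_along n : gc (j + m * lwin j n) (lwin j n + rwin j n).+1 = afr j.+1 n.
Proof.
rewrite -gc_window_right /afr lwin_succ_along -rwin_succ_along.
rewrite (_ : j.+1 + m * (lwin j n).+1 = j + m * lwin j n + N * 1); last by nia.
by rewrite gc_periodicK; congr gc; lia.
Qed.
End RightNeighbourAlong.

Section RightNeighbourAgainst.
Variable j : nat.
Hypothesis oc_j : oc j = false.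

Lemma rwin_succ_against n : rwin j.+1 n + 1 = rwin j n.
Proof.
elim: n => [|n IH]; first by rewrite /= (fwd_gap_false oc_j) addn1.
rewrite (rwinS j.+1 n) (rwinS j n) -IH.
by rewrite (_ : j + (rwin j.+1 n + 1) + 1 = j.+1 + rwin j.+1 n + 1); lia.
Qed.

Lemma lwin_succ_against n : lwin j.+1 n.+1 = (lwin j n).+1.
Proof.
elim: n => [|n IH].
  by rewrite /= (bwd_gap_false (q := j.+1)) ?oc_succ_pred // muln1 addSnnS bwd_gap_periodic; lia.
rewrite (lwinS j.+1 n.+1) (lwinS j n) IH.
rewrite (_ : j.+1 + m * (lwin j n).+2 = j + m * (lwin j n).+1 + N); last by nia.
by rewrite bwd_gap_periodic; lia.
Qed.

Lemma gc_right_against n : gc (j + m * lwin j n) (lwin j n + rwin j n).+1 = afr j.+1 n.+1.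
Proof.
rewrite -gc_window_right /afr lwin_succ_against -(rwin_succ_against n.+1).
rewrite (_ : j.+1 + m * (lwin j n).+1 = j + m * lwin j n + N * 1); last by nia.
by rewrite gc_periodicK; congr gc; lia.
Qed.
End RightNeighbourAgainst.

Section LeftNeighbourAlong.
Variable j : nat.
Hypothesis oc_jm : oc (j + m).

Lemma lwin_pred_along n : (lwin (j + m) n).+1 = lwin j n.
Proof.
elim: n => [|n IH]; first by rewrite /= (bwd_gap_true oc_jm).
rewrite (lwinS (j + m) n) (lwinS j n) -IH.
by rewrite (_ : j + m * (lwin (j + m) n).+2 = j + m + m * (lwin (j + m) n).+1); lia.
Qed.

Lemma rwin_pred_along n : rwin (j + m) n.+1 = rwin j n + 1.
Proof.
elim: n => [|n IH].
  by rewrite /= (fwd_gap_true oc_jm) (_ : j + m + 0 + 1 = j + N) ?fwd_gap_periodic; lia.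
rewrite (rwinS (j + m) n.+1) (rwinS j n) IH.
rewrite (_ : j + m + (rwin j n + 1) + 1 = j + rwin j n + 1 + N); last by lia.
by rewrite fwd_gap_periodic; lia.
Qed.

Lemma gc_left_along n :
  gc (j + m * (lwin j n).+1) (lwin j n + rwin j n).+1 = afr (j + m) n.+1.
Proof. by rewrite -gc_window_left /afr -lwin_pred_along rwin_pred_along; congr gc; lia. Qed.
End LeftNeighbourAlong.

Section LeftNeighbourAgainst.
Variable j : nat.
Hypothesis oc_jm : oc (j + m) = false.

Lemma lwin_pred_against n : lwin j n.+1 = (lwin (j + m) n).+1.
Proof.
elim: n => [|n IH]; first by rewrite /= (bwd_gap_false oc_jm) muln1; lia.
rewrite (lwinS j n.+1) (lwinS (j + m) n) IH.
by rewrite (_ : j + m * (lwin (j + m) n).+2 = j + m + m * (lwin (j + m) n).+1); lia.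
Qed.

Lemma rwin_pred_against n : rwin (j + m) n = (rwin j n).+1.
Proof.
elim: n => [|n IH].
  by rewrite /= (fwd_gap_false oc_jm) (_ : (j + m).+1 = j + N) ?fwd_gap_periodic; lia.
rewrite (rwinS (j + m) n) (rwinS j n) IH.
rewrite (_ : j + m + (rwin j n).+1 + 1 = j + rwin j n + 1 + N); last by lia.
by rewrite fwd_gap_periodic; lia.
Qed.

Lemma gc_left_against n :
  gc (j + m * (lwin j n).+1) (lwin j n + rwin j n).+1 = afr (j + m) n.
Proof. by rewrite -gc_window_left /afr lwin_pred_against rwin_pred_against; congr gc; lia. Qed.
End LeftNeighbourAgainst.

Lemma lwin_periodic j n : lwin (j + N) n = lwin j n.
Proof.
elim: n => [|n IH]; first exact: bwd_gap_periodic.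
rewrite !lwinS IH (_ : j + N + m * (lwin j n).+1 = j + m * (lwin j n).+1 + N); last by lia.
by rewrite bwd_gap_periodic.
Qed.

Lemma rwin_periodic j n : rwin (j + N) n = rwin j n.
Proof.
elim: n => [|n IH]; first exact: fwd_gap_periodic.
by rewrite !rwinS IH (_ : j + N + rwin j n + 1 = j + rwin j n + 1 + N) ?fwd_gap_periodic //; lia.
Qed.

Lemma afr_mod j n : afr (j %% N) n = afr j n.
Proof.
apply: (periodic_mod (f := afr^~ n)) => i.
rewrite /afr lwin_periodic rwin_periodic.
by rewrite (_ : i + N + m * lwin i n = i + m * lwin i n + N * 1) ?gc_periodicK //; lia.
Qed.
End CyclicFrise.

Section AcyclicCycle.
Variables (m : nat) (o : 'I_m.+1 -> bool).
Hypothesis o_acyclic : acyclic_orientation o.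
Local Notation N := m.+1.
Local Notation arrow := (cyc_arrow o).

Lemma iter_ordS_N (x : 'I_N) : iter N (@ordS N) x = x.
Proof.
have iter_val k : val (iter k (@ordS N) x) = (x + k) %% N.
  elim: k => [|k IH]; first by rewrite addn0 modn_small.
  by rewrite iterS /= IH -addn1 modnDml addn1 -addnS.
by apply: val_inj; rewrite iter_val modnDr modn_small.
Qed.

Lemma iter_ord_pred_N (x : 'I_N) : iter N (@ord_pred N) x = x.
Proof.
have iterK k y : iter k (@ordS N) (iter k (@ord_pred N) y) = y.
  by elim: k y => [|k IH] y //; rewrite iterSr iterS ord_predK IH.
by rewrite -{2}(iterK N x) iter_ordS_N.
Qed.

Lemma connect_iter (f : 'I_N -> 'I_N) : (forall y, arrow y (f y)) ->
  forall k x, connect arrow x (iter k f x).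
Proof.
move=> hf; elim=> [|k IH] x //=.
by apply: connect_trans (IH x) _; apply: connect1.
Qed.

(* An orientation with all edges j -> j+1 (or all j+1 -> j) has a cycle. *)
Lemma acyclic_has_true : exists i, o i.
Proof.
case: (boolP [exists i, o i]) => [/existsP //|/existsPn all_false]; exfalso.
move/negP: o_acyclic; apply; apply/existsP; exists (ordS ord0); apply/existsP; exists ord0.
apply/andP; split; first by rewrite /cyc_arrow eqxx all_false orbT.
have := connect_iter (f := @ord_pred N) _ m ord0.
rewrite -[ordS ord0]iter_ord_pred_N iterSr ordSK; apply => y.
by rewrite /cyc_arrow ord_predK eqxx (all_false _) orbT.
Qed.

Lemma acyclic_has_false : exists i, ~~ o i.
Proof.
case: (boolP [exists i, ~~ o i]) => [/existsP //|/existsPn all_true]; exfalso.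
move/negP: o_acyclic; apply; apply/existsP; exists (ord_pred ord0); apply/existsP; exists ord0.
apply/andP; split; first by rewrite /cyc_arrow ord_predK eqxx (negbNE (all_true _)).
have := connect_iter (f := @ordS N) _ m ord0.
rewrite -[ord_pred ord0]iter_ordS_N iterSr ord_predK; apply => y.
by rewrite /cyc_arrow eqxx (negbNE (all_true _)).
Qed.

(* Induction along arrows, on the number of vertices with a path to j. *)
Lemma acyclic_ind (P : 'I_N -> Prop) :
  (forall j, (forall i, arrow i j -> P i) -> P j) -> forall j, P j.
Proof.
move=> IHP; pose anc j := [set i | connect arrow i j].
suff anc_ind k j : #|anc j| <= k -> P j by move=> j; apply: (anc_ind _ j (leqnn _)).
elim: k j => [|k IH] j hk.
  have : j \in anc j by rewrite inE connect0.
  by move: hk; rewrite leqn0 cards_eq0 => /eqP ->; rewrite inE.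
apply: IHP => i hij; apply: IH; rewrite -ltnS; apply: leq_trans hk.
apply: proper_card; apply/properP; split.
  by apply/subsetP => y; rewrite !inE => hy; apply: connect_trans hy (connect1 hij).
exists j; rewrite inE ?connect0 //; apply/negP => hji; move/negP: o_acyclic; apply.
by apply/existsP; exists i; apply/existsP; exists j; rewrite hij hji.
Qed.
End AcyclicCycle.

Lemma prod_pred2 (R : comNzRingType) (T : finType) (s p : T) (b1 b2 : bool)
    (P : pred T) (F : T -> R) :
  s != p -> P =1 (fun i => ((i == s) && b1) || ((i == p) && b2)) ->
  (\prod_(i | P i) F i = (if b1 then F s else 1) * (if b2 then F p else 1))%R.
Proof.
move=> sp hP.
have prod1 (t : T) (b : bool) : (\prod_(i | (i == t) && b) F i = if b then F t else 1)%R.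
  case: b; last by rewrite big_pred0 // => i; rewrite andbF.
  by rewrite (eq_bigl _ _ (fun i => andbT _)) big_pred1_eq.
rewrite (bigID (pred1 s)) /= -(prod1 s b1) -(prod1 p b2).
congr (_ * _)%R; apply: eq_bigl => i; rewrite hP.
  by case: (eqVneq i s) => [->|_]; rewrite ?(negbTE sp) ?andbT ?andbF ?orbF.
by case: (eqVneq i s) => [->|_]; rewrite ?(negbTE sp) ?andbF ?andbT.
Qed.

Lemma K_rational_ext (n : nat) (a b : nat -> ratfun n) :
  a =1 b -> K_rational a -> K_rational b.
Proof.
move=> eq_ab [r [l [M [g [hl [hM [hg ha]]]]]]].
by exists r, l, M, g; do !split => //; move=> k; rewrite -eq_ab ha.
Qed.

Section FriseSolution.
Variables (m : nat) (o : 'I_m.+1 -> bool).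
Hypothesis o_acyclic : acyclic_orientation o.
Local Notation N := m.+1.
Let has_true := acyclic_has_true o_acyclic.
Let has_false := acyclic_has_false o_acyclic.
Local Notation afr := (afr has_true has_false).
Local Notation zc := (zc m).
Local Notation oc := (oc o).

Lemma afr_ordS (j : 'I_N) n : afr (ordS j) n = afr j.+1 n.
Proof. by rewrite -[RHS]afr_mod. Qed.

Lemma afr_ord_pred (j : 'I_N) n : afr (ord_pred j) n = afr (j + m) n.
Proof. by rewrite -[RHS]afr_mod (_ : (j + m)%N = (j + N).-1) // addnS. Qed.

Lemma o_ord_pred (j : 'I_N) : o (ord_pred j) = oc (j + m).
Proof. by rewrite /oc; congr o; apply: val_inj; rewrite /= addnS. Qed.

Lemma o_oc (j : 'I_N) : o j = oc j.
Proof. by rewrite /oc cyc_ord. Qed.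

Lemma ordS_neq_pred (j : 'I_N) : (2 <= m)%N -> ordS j != ord_pred j.
Proof.
move=> m_ge2; apply/eqP => /(congr1 val) /= /eqP.
rewrite addnS -addn1 eqn_modDl !modn_small //; first by case: eqP m_ge2 => // <-.
by apply: ltn_trans m_ge2 _.
Qed.

Lemma arrow_out (j : 'I_N) : cyc_arrow o j =1
  (fun i => ((i == ordS j) && o j) || ((i == ord_pred j) && ~~ o (ord_pred j))).
Proof.
move=> i; rewrite /cyc_arrow; congr (_ || _).
case: (eqVneq i (ord_pred j)) => [->|hi]; first by rewrite ord_predK eqxx.
by case: (eqVneq j (ordS i)) => [hj|] //=; case/negP: hi; rewrite hj ordSK.
Qed.

Lemma arrow_in (j : 'I_N) : (fun i => cyc_arrow o i j) =1
  (fun i => ((i == ord_pred j) && o (ord_pred j)) || ((i == ordS j) && ~~ o j)).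
Proof.
move=> i; rewrite /cyc_arrow; congr (_ || _).
case: (eqVneq i (ord_pred j)) => [->|hi]; first by rewrite ord_predK eqxx.
by case: (eqVneq j (ordS i)) => [hj|] //=; case/negP: hi; rewrite hj ordSK.
Qed.

Lemma afr_frise : (2 <= m)%N -> frise_with_variables o (fun j n => afr j n).
Proof.
move=> m_ge2; split=> [j|j n]; first by rewrite afr0 /zc cyc_ord.
have pred_neq_S : ord_pred j != ordS j by rewrite eq_sym ordS_neq_pred.
rewrite (prod_pred2 _ (ordS_neq_pred j m_ge2) (arrow_out j)).
rewrite (prod_pred2 _ pred_neq_S (arrow_in j)) !afr_ordS !afr_ord_pred.
rewrite afr_diamond o_ord_pred o_oc.
case oc_j : (oc j); case oc_jm : (oc (j + m)) => /=.
- by rewrite gc_right_along ?gc_left_along // !mulr1.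
- by rewrite gc_right_along ?gc_left_against // !mulr1.
- by rewrite gc_right_against ?gc_left_along // !mul1r mulrC.
- by rewrite gc_right_against ?gc_left_against // !(mul1r, mulr1) mulrC.
Qed.

Lemma tmat_in_K i :
  (forall b1 b2, in_K (ent (tmat zc oc i) b1 b2)) /\ in_Kpos (e11 (tmat zc oc i)).
Proof.
have ratio : in_Kpos (zc i.+1 / zc i).
  by apply: in_KposM; [exact: in_Kpos_zvar | exact: in_Kpos_zvarV].
rewrite /tmat; case: (oc i); split=> //; try (case; case) => /=;
  by [exact: in_Kpos_K ratio | exact: in_K0 | exact: in_K1 | exact: in_Kpos1
     | exact: (in_Kpos_K (in_Kpos_zvarV _))].
Qed.

Lemma tprod_in_K p d :
  (forall b1 b2, in_K (ent (tprod zc oc p d) b1 b2)) /\ in_Kpos (e11 (tprod zc oc p d)).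
Proof.
elim: d => [|d [IHent IH11]] /=.
  split; last exact: in_Kpos1.
  by case; case; [exact: in_K1 | exact: in_K0 | exact: in_K0 | exact: in_K1].
have [Tent T11] := tmat_in_K (p + d); split.
  by move=> b1 b2; rewrite ent_mmul; apply: in_KD; apply: in_KM.
apply: in_KposD; first exact: in_KposM.
by apply: in_KM; [exact: (IHent true false) | exact: (Tent false true)].
Qed.

Lemma afr_in_Kpos j n : in_Kpos (afr j n).
Proof. by apply: in_KposM; [exact: in_Kpos_zvar | exact: (tprod_in_K _ _).2]. Qed.

(* Uniqueness: row n+1 is determined by row n, vertex after vertex along
   the arrows, since afr j n is nonzero. *)
Lemma frise_unique (a : 'I_N -> nat -> ratfun N) : (2 <= m)%N ->
  frise_with_variables o a -> forall n j, a j n = afr j n.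
Proof.
move=> m_ge2 [a0 aS]; have [afr_init afrS] := afr_frise m_ge2.
elim=> [|n IH] j; first by rewrite a0 afr_init.
elim/(acyclic_ind o_acyclic): j => j IHj.
apply: (mulfI (in_Kpos_neq0 (afr_in_Kpos j n))).
rewrite -[afr j n in LHS]IH afrS aS (eq_bigr _ (fun i _ => IH i)).
by rewrite (eq_bigr _ (fun i hi => IHj i hi)).
Qed.
End FriseSolution.

(* Passing from row n to row n+1 extends the window of
   a(j, n) on the left by a block lmat and on the right by a block rmat, and
   these blocks only depend on the window ends modulo N.  So the entries of
   the window product follow a finite automaton with states the pairs of
   window ends modulo N. *)
Section FriseRational.
Variables (m : nat) (o : 'I_m.+1 -> bool).
Hypothesis o_acyclic : acyclic_orientation o.
Local Notation N := m.+1.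
Let has_true := acyclic_has_true o_acyclic.
Let has_false := acyclic_has_false o_acyclic.
Local Notation afr := (afr has_true has_false).
Local Notation lwin := (lwin has_false).
Local Notation rwin := (rwin has_true).
Local Notation bwd_gap := (bwd_gap has_false).
Local Notation fwd_gap := (fwd_gap has_true).
Local Notation zc := (zc m).
Local Notation oc := (oc o).
Local Notation tprod := (tprod zc oc).

Definition lmat (p : nat) : m2 (ratfun N) :=
  tprod (p + m * (1 + bwd_gap (p + m))) (1 + bwd_gap (p + m)).
Definition rmat (e : nat) : m2 (ratfun N) := tprod e (1 + fwd_gap (e + 1)).

Lemma tprod_periodicK p k d : tprod (p + N * k) d = tprod p d.
Proof.
exact: (periodic_mulK (f := tprod^~ d)
          (fun p => tprod_periodic (@zc_periodic m) (@oc_periodic m o) p d)).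
Qed.

Lemma lmat_periodic p : lmat (p + N) = lmat p.
Proof.
rewrite /lmat (_ : p + N + m = p + m + N) ?bwd_gap_periodic; last by lia.
by rewrite (_ : p + N + _ = p + m * (1 + bwd_gap (p + m)) + N * 1) ?tprod_periodicK //; lia.
Qed.

Lemma rmat_periodic e : rmat (e + N) = rmat e.
Proof.
rewrite /rmat (_ : e + N + 1 = e + 1 + N) ?fwd_gap_periodic; last by lia.
by rewrite (_ : e + N = e + N * 1) ?tprod_periodicK // muln1.
Qed.

Lemma tprod_window_succ j k :
  tprod (j + m * lwin j k.+1) (lwin j k.+1 + rwin j k.+1) =
  mmul (mmul (lmat (j + m * lwin j k)) (tprod (j + m * lwin j k) (lwin j k + rwin j k)))
       (rmat (j + rwin j k)).
Proof.
rewrite lwinS rwinS /lmat /rmat; set l := lwin j k; set r := rwin j k.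
rewrite (_ : j + m * l.+1 = j + m * l + m); last by lia.
set c := bwd_gap (j + m * l + m); set c' := fwd_gap (j + r + 1).
rewrite (_ : j + m * (l + 1 + c) = j + m * l + m * (1 + c)); last by lia.
rewrite (_ : l + 1 + c + (r + 1 + c') = (1 + c) + ((l + r) + (1 + c'))); last by lia.
rewrite (tprodD _ _ _ (1 + c)) (tprodD _ _ _ (l + r)) mmulA; congr (mmul (mmul _ _) _).
  by rewrite (_ : _ + (1 + c) = j + m * l + N * (1 + c)) ?tprod_periodicK //; nia.
by rewrite (_ : _ + (l + r) = j + r + N * (l + 1 + c)) ?tprod_periodicK //; nia.
Qed.

Section Automaton.
Variable j : nat.

Definition window_state k : 'I_N * 'I_N := (cyc m (j + m * lwin j k), cyc m (j + rwin j k)).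

Definition next_state (s : 'I_N * 'I_N) : 'I_N * 'I_N :=
  (cyc m (s.1 + m * (1 + bwd_gap (s.1 + m))), cyc m (s.2 + 1 + fwd_gap (s.2 + 1))).

Lemma iter_next_state k : iter k next_state (window_state 0) = window_state k.
Proof.
elim: k => [|k IH] //; rewrite iterS IH /next_state /window_state /=; congr (_, _).
  pose F a := cyc m (a + m * (1 + bwd_gap (a + m))).
  have F_periodic a : F (a + N) = F a.
    rewrite /F (_ : a + N + m = a + m + N) ?bwd_gap_periodic; last by lia.
    by apply: val_inj; rewrite /= addnAC modnDr.
  transitivity (F (j + m * lwin j k)); first exact: (periodic_mod F_periodic).
  rewrite /F (_ : j + m * lwin j k + m = j + m * (lwin j k).+1); last by nia.
  by congr cyc; nia.
pose F a := cyc m (a + 1 + fwd_gap (a + 1)).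
have F_periodic a : F (a + N) = F a.
  rewrite /F (_ : a + N + 1 = a + 1 + N) ?fwd_gap_periodic; last by lia.
  by apply: val_inj; rewrite /= addnAC modnDr.
transitivity (F (j + rwin j k)); first exact: (periodic_mod F_periodic).
by rewrite /F; congr cyc; lia.
Qed.

Lemma afr_rational : K_rational (afr j).
Proof.
pose L (s : 'I_N * 'I_N) (c d : bool * bool) :=
  (ent (lmat s.1) c.1 d.1 * ent (rmat s.2) d.2 c.2)%R.
pose lam (s : 'I_N * 'I_N) (b : bool * bool) := if b.1 && b.2 then zc s.1 else 0%R.
pose v k (b : bool * bool) := ent (tprod (j + m * lwin j k) (lwin j k + rwin j k)) b.1 b.2.
apply: (@automaton_rational N _ _ (window_state 0) (true, true) next_state L lam v).
- by move=> s c d; apply: in_KM; apply: (tprod_in_K o _ _).1.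
- by move=> s b; rewrite /lam; case: (_ && _); [exact: in_K_zvar | exact: in_K0].
- by move=> b; apply: (tprod_in_K o _ _).1.
- move=> k b; rewrite iter_next_state /v tprod_window_succ ent_conj /L /=.
  by apply: eq_bigr => y _; rewrite (periodic_mod lmat_periodic) (periodic_mod rmat_periodic).
- move=> k; rewrite iter_next_state.
  rewrite -(pair_bigA _ (fun b1 b2 => lam (window_state k) (b1, b2) * v k (b1, b2))%R).
  by rewrite /= !big_bool /lam /v /= !mul0r !addr0 (periodic_mod (@zc_periodic m)).
Qed.
End Automaton.
End FriseRational.

Unset Implicit Arguments.

Theorem corollary2 (m : nat) (hm : (2 <= m)%N) (o : 'I_m.+1 -> bool)
    (hacyc : acyclic_orientation o) :
  (exists a : 'I_m.+1 -> nat -> ratfun m.+1, frise_with_variables o a) /\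
  (forall a : 'I_m.+1 -> nat -> ratfun m.+1, frise_with_variables o a ->
     forall j : 'I_m.+1, K_rational (a j)).
Proof.
split; first by eexists; exact: (afr_frise hacyc hm).
move=> a frise_a j.
apply: K_rational_ext (afr_rational hacyc j) => n.
by rewrite (frise_unique hacyc hm frise_a).
Qed.
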